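(* For integers $n\ge1$ and $0\le k\le n-1$, $$\sum_{r=0}^{n}N_k^{n,r}=2^{k+1}(k+1)\frac{(2n-k-2)!}{n!\,(n-k-1)!}.$$ Equivalently, if two independent walkers start at the origin and each takes $n$ steps, each step being N or E with probability $1/2$ independently, then conditional on finishing at the same point, the probability that their vertex sets share exactly $k$ points other than the origin and the common endpoint is $$p(n,k)=\frac{2^{k+1}(k+1)(2n-k-2)!\,n!}{(n-k-1)!\,(2n)!}.$$
   Context: For $n\ge1$ and $0\le r\le n$, a lattice path from $(0,0)$ to $(r,n-r)$ is a sequence of lattice points $v_0=(0,0),\dots,v_n=(r,n-r)$ with each step $v_i-v_{i-1}\in\{(1,0)\ (\text{E}),(0,1)\ (\text{N})\}$; its vertex set is $\{v_0,\dots,v_n\}$. $N_k^{n,r}$ denotes the number of ordered pairs of lattice paths from $(0,0)$ to $(r,n-r)$ whose vertex sets share exactly $k$ points other than $(0,0)$ and $(r,n-r)$. *)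

From mathcomp Require Import all_boot.
Set Implicit Arguments. Unset Strict Implicit. Unset Printing Implicit Defensive.

(* A lattice path with n steps is encoded by its step word s : n.-tuple bool,
   true = E = (1,0), false = N = (0,1). *)

Definition vert (s : seq bool) (i : nat) : nat * nat :=
  let e := count id (take i s) in (e, i - e).

Definition vertices (s : seq bool) : seq (nat * nat) :=
  [seq vert s i | i <- iota 0 (size s).+1].

Definition shared (n r : nat) (s t : seq bool) : nat :=
  size [seq x <- undup (vertices s) |
         [&& x \in vertices t, x != (0, 0) & x != (r, n - r)]].

Definition Nk (k n r : nat) : nat :=
  #|[set pq : n.-tuple bool * n.-tuple bool |
      [&& vert pq.1 n == (r, n - r), vert pq.2 n == (r, n - r)
        & shared n r pq.1 pq.2 == k]]|.

From mathcomp Require Import all_boot ssralg ssrint zify.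
Set Implicit Arguments. Unset Strict Implicit. Unset Printing Implicit Defensive.
Import GRing.Theory.

(* Two paths of n steps can only share a vertex reached after the same number i of
   steps, and they do exactly when the difference walk d_i = #E_s(i) - #E_t(i) vanishes.
   Its steps -1, 0, +1 have multiplicities 1, 2, 1, as for two steps of a simple walk.
   By induction on the length m, the pairs whose difference walk starts at d, ends at 0
   and has z >= 1 zeros (the start included) number 2^(z-1) times the simple walks of
   length 2m-z+1 from 2|d|+z-1 that first reach 0 at their last step.  The ballot
   theorem evaluates these first-passage counts in closed form. *)

Fixpoint first_passage (N h : nat) : nat :=
  match N, h with
  | 0, _ => h == 0
  | N.+1, 0 => 0
  | N.+1, h.+1 => first_passage N h + first_passage N h.+2
  end.

Lemma first_passage_gt N h : N < h -> first_passage N h = 0.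
Proof. by elim: N h => [|N IH] [|h] //= ltNh; rewrite !IH //; lia. Qed.

Lemma first_passage_diag N : first_passage N N = 1.
Proof. by elim: N => //= N ->; rewrite first_passage_gt. Qed.

Lemma ballot_step q h a b :
  a * ((h + q).+1`! * q.+1`!) = h * (h + 2 * q).+1`! ->
  b * ((h + q).+2`! * q`!) = h.+2 * (h + 2 * q).+1`! ->
  (a + b) * ((h + q).+2`! * q.+1`!) = h.+1 * (h + 2 * q).+2`!.
Proof.
rewrite [(h + q).+2`!]factS [q.+1`!]factS [(h + 2 * q).+2`!]factS.
set X := (h + q).+1`!; set F := (h + 2 * q).+1`!; set Y := q`! => Ha Hb.
transitivity ((h + q).+2 * (a * (X * (q.+1 * Y))) + q.+1 * (b * ((h + q).+2 * X * Y))).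
  nia.
rewrite Ha Hb; nia.
Qed.

Lemma ballot q h :
  first_passage (h + 2 * q).+1 h.+1 * ((h + q).+1`! * q`!) = h.+1 * (h + 2 * q)`!.
Proof.
elim: q h => [|q IHq] h.
  by rewrite !addn0 first_passage_diag mul1n muln1.
have E2 h' : h' + 2 * q.+1 = (h' + 2 * q).+2 by lia.
(* The step down from h'.+1 is the case (q.+1, h' - 1), whence an inner induction on h. *)
suff step h' : first_passage (h' + 2 * q).+2 h' * ((h' + q).+1`! * q.+1`!)
               = h' * (h' + 2 * q).+1`! ->
    first_passage (h' + 2 * q.+1).+1 h'.+1 * ((h' + q.+1).+1`! * q.+1`!)
    = h'.+1 * (h' + 2 * q.+1)`!.
  elim: h => [|h IHh]; apply: step => //.
  by move: IHh; rewrite E2 addnS addSn.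
move=> Ha; rewrite E2 addnS; apply: ballot_step Ha _.
by have := IHq h'.+1; rewrite !addSn.
Qed.

Section BigTuple.
Variables (R : Type) (idx : R) (op : Monoid.com_law idx) (T : finType).

Lemma big_tuple0 (F : 0.-tuple T -> R) : \big[op/idx]_(s : 0.-tuple T) F s = F [tuple].
Proof. by rewrite (big_pred1 [tuple]) // => s; apply/esym/eqP; exact: tuple0. Qed.

Lemma big_tupleS m (F : m.+1.-tuple T -> R) :
  \big[op/idx]_(s : m.+1.-tuple T) F s =
  \big[op/idx]_(x : T) \big[op/idx]_(s : m.-tuple T) F [tuple of x :: s].
Proof.
rewrite pair_bigA (reindex (fun p : T * m.-tuple T => [tuple of p.1 :: p.2])) //.
exists (fun s => (thead s, [tuple of behead s])) => [[x s] _ | s _].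
  by congr pair; apply: val_inj.
by rewrite -tuple_eta.
Qed.

End BigTuple.

Fixpoint diff_zeros (d : int) (s t : seq bool) : nat :=
  match s, t with
  | x :: s, y :: t => (d == 0%R) + diff_zeros (d + x%:Z - y%:Z)%R s t
  | _, _ => d == 0%R
  end.

Definition zeros_count (m z : nat) (d : int) : nat :=
  \sum_(s : m.-tuple bool) \sum_(t : m.-tuple bool)
    ((d + (count id s)%:Z - (count id t)%:Z == 0)%R && (diff_zeros d s t == z)).

Lemma diff_zeros0_gt0 s t : 0 < diff_zeros 0 s t.
Proof. by case: s t => [|x s] [|y t]. Qed.

Lemma zeros_count0 m : zeros_count m 0 0 = 0.
Proof.
by apply: big1 => s _; apply: big1 => t _; rewrite eqn0Ngt diff_zeros0_gt0 andbF.
Qed.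

Lemma zeros_countS m z d :
  zeros_count m.+1 ((d == 0%R) + z) d =
  2 * zeros_count m z d + zeros_count m z (d - 1)%R + zeros_count m z (d + 1)%R.
Proof.
have -> : zeros_count m.+1 ((d == 0%R) + z) d =
          \sum_(x : bool) \sum_(y : bool) zeros_count m z (d + x%:Z - y%:Z)%R.
  rewrite /zeros_count big_tupleS; apply: eq_bigr => x _.
  rewrite exchange_big big_tupleS; apply: eq_bigr => y _.
  rewrite exchange_big; apply: eq_bigr => s _; apply: eq_bigr => t _ /=.
  by rewrite eqn_add2l; congr andb; lia.
rewrite !big_bool /= !addrK.
have -> : (d + 1%Z - 0%Z = d + 1)%R by lia.
have -> : (d + 0%Z - 1%Z = d - 1)%R by lia.
lia.
Qed.

Definition zeros_formula (m z D : nat) : nat :=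
  if z is w.+1 then 2 ^ w * first_passage (2 * m - w) (2 * D + w) else 0.

Lemma zeros_formula0 z D : zeros_formula 0 z D = (D == 0) && (z == 1).
Proof. by case: z => [|[|w]] /=; lia. Qed.

Lemma zeros_formulaS0 m z :
  zeros_formula m.+1 z.+1 0 = 2 * zeros_formula m z 0 + 2 * zeros_formula m z 1.
Proof.
case: z => [|w] /=; first by rewrite muln0.
rewrite muln0 muln1 !add0n.
have [le_w2m | lt_2mw] := leqP w (2 * m).
  have -> : 2 * m.+1 - w.+1 = (2 * m - w).+1 by lia.
  rewrite expnS /= add2n; nia.
by rewrite !first_passage_gt ?muln0 //; lia.
Qed.

Lemma zeros_formulaSS m z D :
  zeros_formula m.+1 z D.+1 =
  2 * zeros_formula m z D.+1 + zeros_formula m z D + zeros_formula m z D.+2.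
Proof.
case: z => [|w] //=.
have [le_w2m | lt_2mw] := leqP w (2 * m).
  have -> : 2 * m.+1 - w = (2 * m - w).+2 by lia.
  have -> : 2 * D.+2 + w = (2 * D + w).+4 by lia.
  have -> : 2 * D.+1 + w = (2 * D + w).+2 by lia.
  rewrite /=; lia.
by rewrite !first_passage_gt ?muln0 //; lia.
Qed.

Lemma zeros_formula_step m z (d : int) :
  zeros_formula m.+1 ((d == 0%R) + z) `|d| =
  2 * zeros_formula m z `|d| + zeros_formula m z `|(d - 1)%R|
  + zeros_formula m z `|(d + 1)%R|.
Proof.
case: d => [[|D]|D].
- by rewrite zeros_formulaS0 /= subnn add0n; lia.
- have -> : `|(D.+1%:Z - 1)%R| = D by lia.
  have -> : `|(D.+1%:Z + 1)%R| = D.+2 by lia.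
  by rewrite zeros_formulaSS.
- have -> : `|(Negz D - 1)%R| = D.+2 by lia.
  have -> : `|(Negz D + 1)%R| = D by lia.
  by rewrite zeros_formulaSS add0n addnAC.
Qed.

Lemma zeros_count_formula m z d : zeros_count m z d = zeros_formula m z `|d|.
Proof.
elim: m z d => [|m IH] z d.
  by rewrite /zeros_count !big_tuple0 zeros_formula0 /=; lia.
suff step z' : zeros_count m.+1 ((d == 0%R) + z') d
               = zeros_formula m.+1 ((d == 0%R) + z') `|d|.
  case: eqVneq step => [-> | _] step; last exact: step.
  by case: z => [|z]; [rewrite zeros_count0 | exact: step].
by rewrite zeros_countS zeros_formula_step !IH.
Qed.

Lemma diff_zeros_count d s t : size s = size t ->
  diff_zeros d s t = count (fun i =>
    d + (count id (take i s))%:Z - (count id (take i t))%:Z == 0)%R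
    (iota 0 (size s).+1).
Proof.
elim: s d t => [|x s IH] d [|y t] // => [_ | [eq_st]].
  by rewrite /= addn0; congr (nat_of_bool _); lia.
rewrite [LHS]/= -[iota 0 _]/(0 :: iota (1 + 0) (size s).+1) iotaDl.
rewrite -[0 :: _]cat1s count_cat count_map IH //.
congr (_ + _); first by rewrite /= addn0; congr (nat_of_bool _); lia.
by apply: eq_count => i; rewrite /= add0n; lia.
Qed.

Lemma count_iota_ends (P : pred nat) n :
  count P (iota 0 n.+2) = P 0 + count P (iota 1 n) + P n.+1.
Proof. by rewrite -addn1 iotaD count_cat /= add0n addn0. Qed.

Lemma count_take_le s i : count id (take i s) <= i.
Proof. by rewrite (leq_trans (count_size _ _)) // size_take_min geq_minl. Qed.

Lemma vert_size s : vert s (size s) = (count id s, size s - count id s).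
Proof. by rewrite /vert take_size. Qed.

Lemma vert_endE n s r : size s = n -> (vert s n == (r, n - r)) = (r == count id s).
Proof. by move=> <-; rewrite vert_size xpair_eqE; lia. Qed.

Lemma vert_inj s : injective (vert s).
Proof. by move=> i j [Ei Ej]; have := count_take_le s i; have := count_take_le s j; lia. Qed.

Lemma mem_vertices s t i :
  (vert s i \in vertices t) = (i <= size t) && (vert s i == vert t i).
Proof.
apply/mapP/andP => [[j] | [le_it /eqP Est]]; last by exists i; rewrite // mem_iota.
rewrite mem_iota => /andP [_ lt_jt] Est.
have Eij : i = j.
  move: Est => [Ei Ej]; have := count_take_le s i; have := count_take_le t j; lia.
by subst j; rewrite Est; split; [lia | apply: eqxx].
Qed.

Lemma shared_diff_zeros n s t :
  size s = n.+1 -> size t = n.+1 -> count id s = count id t ->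
  (shared n.+1 (count id s) s t).+2 = diff_zeros 0 s t.
Proof.
move=> Hs Ht Hst.
have vs_end := vert_size s; rewrite Hs in vs_end.
have vs0 : vert s 0 = (0, 0) by rewrite /vert take0.
rewrite diff_zeros_count ?Hs ?Ht // /shared [vertices s]/vertices undup_id; last first.
  by rewrite map_inj_in_uniq ?iota_uniq // => i j _ _ /vert_inj.
rewrite size_filter count_map Hs !count_iota_ends /= vs0 vs_end !eqxx !andbF.
rewrite !take0 !take_oversize ?Hs ?Ht // Hst.
set A := count (preim _ _) _; set B := count _ (iota 1 n).
suff -> : A = B by lia.
apply: eq_in_count => i; rewrite mem_iota => /andP [gt0i ltin] /=.
have -> : vert s i != (0, 0) by rewrite -vs0; apply/eqP => /vert_inj; lia.
have -> : vert s i != (count id t, n.+1 - count id t).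
  by rewrite -Hst -vs_end; apply/eqP => /vert_inj; lia.
rewrite mem_vertices Ht /vert xpair_eqE !andbT; lia.
Qed.

Lemma sum_Nk n k :
  \sum_(0 <= r < n.+1) Nk k n r =
  \sum_(s : n.-tuple bool) \sum_(t : n.-tuple bool)
    ((count id s == count id t) && (shared n (count id s) s t == k)).
Proof.
rewrite /Nk; under eq_bigr => r _ do rewrite -sum1dep_card big_mkcond /=.
rewrite exchange_big [RHS]pair_bigA; apply: eq_bigr => [[s t]] _ /=.
have cs_le : count id s < n.+1 by rewrite ltnS -[n in _ <= n](size_tuple s) count_size.
transitivity (\sum_(0 <= r < n.+1 | r == count id s)
  ((count id s == count id t) && (shared n (count id s) s t == k) : nat)).
  rewrite [RHS]big_mkcond; apply: eq_bigr => r _.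
  by rewrite !vert_endE ?size_tuple //; case: eqVneq => [-> | _].
by rewrite big_nat1_eq cs_le.
Qed.

Lemma sum_Nk_zeros_count n k :
  \sum_(0 <= r < n.+2) Nk k n.+1 r = zeros_count n.+1 k.+2 0.
Proof.
rewrite sum_Nk; apply: eq_bigr => s _; apply: eq_bigr => t _.
have [cst | /negbTE csnt] := eqVneq (count id s) (count id t).
  by rewrite -(shared_diff_zeros (size_tuple s) (size_tuple t) cst) cst subrr !eqxx.
by rewrite add0r subr_eq0 eqz_nat csnt.
Qed.

Unset Implicit Arguments.
Theorem mainTheorem7 (n k : nat) (hn : 1 <= n) (hk : k <= n - 1) :
  (\sum_(0 <= r < n.+1) Nk k n r) * (n`! * (n - k - 1)`!)
  = 2 ^ k.+1 * k.+1 * (2 * n - k - 2)`!.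
Proof.
case: n hn hk => [|n] // _ hk.
rewrite sum_Nk_zeros_count zeros_count_formula /= muln0 add0n.
have := ballot (n - k) k.
have -> : k + 2 * (n - k) = 2 * n.+1 - k.+2 by lia.
have -> : k + (n - k) = n by lia.
have -> : n.+1 - k - 1 = n - k by lia.
have -> : (2 * n.+1 - k.+2).+1 = 2 * n.+1 - k.+1 by lia.
have -> : 2 * n.+1 - k - 2 = 2 * n.+1 - k.+2 by lia.
by rewrite -mulnA => ->; rewrite mulnA.
Qed.
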